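(* Let $L$ be a precompact Hausdorff co-Heyting algebra, let $x\in\mathcal I^{!\wedge}(L)$, and let $r$ be the cofoundation rank of $x$ in the ordered set $\mathcal I^{!\wedge}(L)$. Then $\dim_{L^*}x^*=r=\operatorname{codim}_L x^{\vee}$, where $x^\vee=\bigwedge\{y\in L: y\not\le x\}$.
   Context: A co-Heyting algebra is a bounded distributive lattice $(L,0,1,\vee,\wedge)$ such that $a-b=\min\{c\in L: a\le b\vee c\}$ exists for all $a,b$. For an ideal $I$, $L/I$ is the quotient by $a\equiv_I b\iff(a-b)\vee(b-a)\in I$. For a bounded distributive lattice $M$: $\operatorname{Spec}M$ is its set of prime filters ordered by inclusion; height/coheight of a prime filter are its foundation rank and its foundation rank for the reverse order in $\operatorname{Spec}M$; $\operatorname{codim}_M a=\min\{\operatorname{height}\mathfrak p: a\in\mathfrak p\}$ ($+\infty$ if none) and $\dim_M a=\sup\{\operatorname{coheight}\mathfrak p: a\in\mathfrak p\}$ ($-\infty$ if none). $L^*$ is $L$ with the reverse order (a bounded distributive lattice), and $x^*$ is $x$ viewed as an element of $L^*$. $dL=\{a:\operatorname{codim}_La\ge d\}$. $L$ is Hausdorff if every nonzero element has finite codimension; precompact if $L/dL$ is finite for every positive integer $d$. $\mathcal I^{!\wedge}(L)$ is the set of completely meet irreducible elements: $x\ne1$ such that $\bigwedge A\le x$ implies $a\le x$ for some $a\in A$. Cofoundation rank in an ordered set is foundation rank for the reverse order. *)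

From HB Require Import structures.
From mathcomp Require Import all_boot all_order.
Set Implicit Arguments. Unset Strict Implicit. Unset Printing Implicit Defensive.
Import Order.TTheory.
Local Open Scope order_scope.

Section Defs.
Context {disp : Order.disp_t} (M : tbDistrLatticeType disp).

Definition is_codiff (a b c : M) : Prop :=
  a <= b `|` c /\ forall c' : M, a <= b `|` c' -> c <= c'.

Definition coHeyting : Prop := forall a b : M, exists c, is_codiff a b c.

Definition prime_filter (P : M -> Prop) : Prop :=
  [/\ P \top, ~ P \bot,
      (forall a b : M, a <= b -> P a -> P b),
      (forall a b : M, P a -> P b -> P (a `&` b))
    & (forall a b : M, P (a `|` b) -> P a \/ P b)].

Definition strict_incl (P Q : M -> Prop) : Prop :=
  (forall a, P a -> Q a) /\ exists a, Q a /\ ~ P a.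

End Defs.

(** Foundation rank (finite values) of x in the ordered set S w.r.t. a strict
    order lt:  [frank_le S lt x n] means the foundation rank of x is defined
    and <= n (equivalently: every strictly descending chain in S starting at
    x has at most n steps). *)
Fixpoint frank_le {T : Type} (S : T -> Prop) (lt : T -> T -> Prop)
    (x : T) (n : nat) : Prop :=
  match n with
  | 0 => forall y, S y -> ~ lt y x
  | n'.+1 => forall y, S y -> lt y x -> frank_le S lt y n'
  end.

Definition frank_eq {T : Type} (S : T -> Prop) (lt : T -> T -> Prop)
    (x : T) (n : nat) : Prop :=
  frank_le S lt x n /\ forall m, (m < n)%N -> ~ frank_le S lt x m.

Section Spec.
Context {disp : Order.disp_t} (M : tbDistrLatticeType disp).

Definition height_le (P : M -> Prop) (n : nat) : Prop :=
  frank_le (@prime_filter _ M) (@strict_incl _ M) P n.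
Definition height_eq (P : M -> Prop) (n : nat) : Prop :=
  frank_eq (@prime_filter _ M) (@strict_incl _ M) P n.
Definition coheight_le (P : M -> Prop) (n : nat) : Prop :=
  frank_le (@prime_filter _ M) (fun Q R => @strict_incl _ M R Q) P n.
Definition coheight_eq (P : M -> Prop) (n : nat) : Prop :=
  frank_eq (@prime_filter _ M) (fun Q R => @strict_incl _ M R Q) P n.

Definition codim_eq (a : M) (n : nat) : Prop :=
  (exists P, [/\ prime_filter P, P a & height_eq P n]) /\
  (forall P, prime_filter P -> P a -> forall m, (m < n)%N -> ~ height_le P m).

(** codim_M a >= d  (includes codim = +oo) *)
Definition codim_ge (a : M) (d : nat) : Prop :=
  forall P, prime_filter P -> P a -> forall m, (m < d)%N -> ~ height_le P m.

Definition dim_eq (a : M) (n : nat) : Prop :=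
  (exists P, [/\ prime_filter P, P a & coheight_eq P n]) /\
  (forall P, prime_filter P -> P a -> coheight_le P n).

Definition cong_mod (I : M -> Prop) (a b : M) : Prop :=
  exists c1 c2, [/\ is_codiff a b c1, is_codiff b a c2 & I (c1 `|` c2)].

Definition hausdorff : Prop :=
  forall a : M, a != \bot -> exists n, codim_eq a n.

(** precompact: L / dL is finite for every positive integer d,
    where dL = {a | codim a >= d} *)
Definition precompact : Prop :=
  forall d : nat, (0 < d)%N ->
    exists s : seq M, forall a : M, exists2 b, b \in s & cong_mod (fun c => codim_ge c d) a b.

Definition is_glb (A : M -> Prop) (m : M) : Prop :=
  (forall a, A a -> m <= a) /\ (forall m', (forall a, A a -> m' <= a) -> m' <= m).

Definition cmi (x : M) : Prop :=
  x != \top /\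
  forall (A : M -> Prop) (m : M), is_glb A m -> m <= x -> exists a, A a /\ a <= x.

End Spec.

(* For a completely meet irreducible x, the elements not below x form a prime
   filter U_x, and the Hausdorff property forces U_x to have finite height r.
   Precompactness makes every prime filter P of finite height h principal, with
   principal complement: modulo (h+2)L there are finitely many classes, prime
   filters of height < h+2 cannot separate congruent elements, and the meet of
   the representatives in P minus the join of those outside P generates P.
   Hence y |-> U_y is an order-reversing correspondence between completely meet
   irreducible elements and prime filters of finite height, so the cofoundation
   rank of x is the height r of U_x.  Prime filters of L^* are complements of
   prime filters of L, which turns dim_{L^*} x^* into the height of U_x as well,
   and x^v is the generator of U_x, whose codimension is therefore r. *)

From HB Require Import structures.
From mathcomp Require Import all_boot all_order boolp.
From mathcomp Require classical_sets.
From Stdlib Require Import Classical.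
Import Order.TTheory.
Local Open Scope order_scope.

Section FoundationRank.
Context {T : Type} {S : T -> Prop} {lt : T -> T -> Prop}.

Lemma frank_le_mono {x n m} : (n <= m)%N -> frank_le S lt x n -> frank_le S lt x m.
Proof.
elim: n x m => [|n IH] x [|m] //= nm H y Sy yx; first by case: (H y Sy yx).
exact: IH (H y Sy yx).
Qed.

Lemma frank_eq_exists {x} : (exists n, frank_le S lt x n) -> exists n, frank_eq S lt x n.
Proof.
move=> [n0 Hn0]; have ex : exists n, `[< frank_le S lt x n >] by exists n0; apply/asboolP.
case: (ex_minnP ex) => n /asboolP Hn nmin; exists n; split=> // m mn /asboolP /nmin.
by rewrite leqNgt mn.
Qed.

Lemma frank_le_sim {T'} {S' : T' -> Prop} {lt' : T' -> T' -> Prop}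
    (sim : T' -> T -> Prop) :
  (forall x' x y', sim x' x -> S' y' -> lt' y' x' -> exists y, [/\ S y, lt y x & sim y' y]) ->
  forall n x' x, sim x' x -> frank_le S lt x n -> frank_le S' lt' x' n.
Proof.
move=> back; elim=> [|n IH] x' x xx' H y' S'y' yx' /=;
  have [y [Sy yx yy']] := back _ _ _ xx' S'y' yx'; first exact: H y Sy yx.
exact: IH yy' (H y Sy yx).
Qed.

Lemma frank_eq_transfer {T'} {S' : T' -> Prop} {lt' : T' -> T' -> Prop} {x' x r} :
  (forall n, frank_le S' lt' x' n <-> frank_le S lt x n) ->
  frank_eq S' lt' x' r -> frank_eq S lt x r.
Proof. by move=> eqv [le min]; split=> [|m mr /eqv]; [exact/eqv | exact: min]. Qed.

End FoundationRank.

Section PrimeFilters.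
Context {disp : Order.disp_t} {M : tbDistrLatticeType disp}.

Definition not_below (y : M) : M -> Prop := fun z => ~ z <= y.

Lemma height_le_sub {P Q : M -> Prop} {n} :
  (forall a, P a -> Q a) -> height_le Q n -> height_le P n.
Proof.
apply: (frank_le_sim (fun P Q : M -> Prop => forall a, P a -> Q a)).
move=> {}P {}Q R PQ pR [RP [w [Pw nRw]]]; exists R; split=> //.
by split=> [a /RP /PQ //|]; exists w; split=> //; apply: PQ.
Qed.

Lemma height_le_descent {R : M -> Prop} {n k} :
  prime_filter R -> height_le R n -> ~ height_le R k ->
  exists Q, [/\ prime_filter Q, (forall a, Q a -> R a), height_le Q k.+1 & ~ height_le Q k].
Proof.
elim: n R => [|n IH] R pR hRn nRk; first by case: nRk; apply: frank_le_mono hRn.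
have [hRk1|nRk1] := classic (height_le R k.+1); first by exists R.
have [Q [pQ QR nQk]] : exists Q, [/\ prime_filter Q, strict_incl Q R & ~ height_le Q k].
  apply: NNPP => noQ; apply: nRk1 => Q pQ QR; apply: NNPP => nQk; apply: noQ; by exists Q.
have [Q' [pQ' Q'Q hQ' nQ']] := IH Q pQ (hRn Q pQ QR) nQk.
by exists Q'; split=> // a /Q'Q; case: QR => + _; apply.
Qed.

Lemma prime_filter_compl {P : M -> Prop} : prime_filter P -> prime_filter (fun z : M^d => ~ P z).
Proof.
case=> Pt Pb Pup Pmeet Pjoin.
split=> [//|/(_ Pt) //|u v vu nPu Pv|u v nPu nPv /Pjoin [] //|u v nPuv].
- exact/nPu/(Pup v u vu Pv).
- by apply: NNPP => /not_or_and [/NNPP Pu /NNPP Pv]; exact/nPuv/Pmeet.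
Qed.

Lemma prime_cong_mod {Q : M -> Prop} {a b : M} {d m} :
  prime_filter Q -> height_le Q m -> (m < d)%N ->
  cong_mod (fun c => codim_ge c d) a b -> Q a <-> Q b.
Proof.
move=> pQ hQ md [c1 [c2 [[abc1 _] [bac2 _] Ic]]].
case: (pQ) => _ _ Qup _ Qjoin.
have notQ c : c <= c1 `|` c2 -> ~ Q c by move=> cc Qc; exact: Ic Q pQ (Qup _ _ cc Qc) m md hQ.
split=> Qa; apply: NNPP => nQb.
- by case: (Qjoin _ _ (Qup _ _ abc1 Qa)) => // /notQ; apply; exact: leUl.
- by case: (Qjoin _ _ (Qup _ _ bac2 Qa)) => // /notQ; apply; exact: leUr.
Qed.

Lemma prime_filter_seq_lower {P : M -> Prop} (s : seq M) :
  prime_filter P -> exists2 a, P a & forall b, b \in s -> P b -> a <= b.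
Proof.
case=> Pt _ _ Pmeet _; elim: s => [|b s [a Pa amin]]; first by exists \top.
have [Pb|nPb] := classic (P b).
- exists (a `&` b) => [|c]; first exact: Pmeet.
  rewrite inE => /predU1P [-> _|cs Pc]; first exact: leIr.
  exact: le_trans (leIl _ _) (amin c cs Pc).
- by exists a => // c; rewrite inE => /predU1P [->|/amin].
Qed.

Lemma prime_filter_seq_upper {P : M -> Prop} (s : seq M) :
  prime_filter P -> exists2 y, ~ P y & forall b, b \in s -> ~ P b -> b <= y.
Proof.
case=> _ Pb _ _ Pjoin; elim: s => [|b s [y nPy ymax]]; first by exists \bot.
have [Pb'|nPb] := classic (P b).
- by exists y => // c; rewrite inE => /predU1P [->|/ymax].
- exists (y `|` b) => [/Pjoin [] //|c].
  rewrite inE => /predU1P [-> _|cs nPc]; first exact: leUr.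
  exact: le_trans (ymax c cs nPc) (leUl _ _).
Qed.

End PrimeFilters.

Section PrimeFilterTheorem.
Context {disp : Order.disp_t} {M : tbDistrLatticeType disp}.
Variables (J : M -> Prop) (a : M).
Hypotheses (J0 : J \bot) (Jdown : forall u v, u <= v -> J v -> J u)
  (Jjoin : forall u v, J u -> J v -> J (u `|` v)) (nJa : ~ J a).

Definition avoiding_filter (X : M -> Prop) := [/\ X a,
  (forall u v, u <= v -> X u -> X v), (forall u v, X u -> X v -> X (u `&` v))
  & forall u, X u -> ~ J u].

Lemma avoiding_filter_maximal : exists A, avoiding_filter A /\
  forall B, classical_sets.proper A B -> ~ avoiding_filter B.
Proof.
(* [Zorn_bigcup] also asks for the union of the empty chain, so the empty set is admitted. *)
pose P (X : M -> Prop) := (forall z, ~ X z) \/ avoiding_filter X.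
have [A [[A0|fA] Amax]] : exists A, P A /\ forall B, classical_sets.proper A B -> ~ P B.
- apply: classical_sets.Zorn_bigcup => F FP Ftot.
  have inF X z : F X -> X z -> avoiding_filter X by move=> /FP [/(_ z)|].
  have [[z0 [X0 FX0 X0z0]]|empty] := classic (exists z, classical_sets.bigcup F id z); last first.
    by left=> z Fz; apply: empty; exists z.
  right; split.
  + by exists X0 => //; case: (inF _ _ FX0 X0z0).
  + move=> u v uv [X FX Xu]; exists X => //.
    by case: (inF _ _ FX Xu) => _ Xup _ _; exact: Xup uv Xu.
  + move=> u v [X FX Xu] [Y FY Yv].
    have [XY|YX] := Ftot X Y FX FY.
    * by exists Y => //; case: (inF _ _ FY Yv) => _ _ Ymeet _; apply: Ymeet (XY _ Xu) Yv.
    * by exists X => //; case: (inF _ _ FX Xu) => _ _ Xmeet _; apply: Xmeet Xu (YX _ Yv).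
  + by move=> u [X FX Xu]; case: (inF _ _ FX Xu) => _ _ _; apply.
- have fa : avoiding_filter (fun z => a <= z).
    split=> // [u v uv au|u v au av|u au Ju]; first exact: le_trans uv.
    + by rewrite lexI au av.
    + by apply: nJa; apply: Jdown au Ju.
  case: (Amax _ _ (or_intror fa)); split=> [z /A0 //|sub].
  exact: A0 a (sub a (lexx a)).
- by exists A; split=> // B AB fB; apply: Amax AB (or_intror fB).
Qed.

Lemma maximal_avoiding_filter_prime A : avoiding_filter A ->
  (forall B, classical_sets.proper A B -> ~ avoiding_filter B) -> prime_filter A.
Proof.
move=> [Aa Aup Ameet AJ] Amax.
have meets_J t : ~ A t -> exists2 g, A g & J (g `&` t).
  move=> nAt; apply: NNPP => noJ.
  apply: (Amax (fun z => exists2 g, A g & g `&` t <= z)).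
    split=> [z Az|sub]; first by exists z => //; exact: leIl.
    by apply: nAt; apply: sub; exists a => //; exact: leIr.
  split=> [|u v uv [g Ag gu]|u v [g Ag gu] [g' Ag' gv]|u [g Ag gu] Ju].
  - by exists a => //; exact: leIl.
  - by exists g => //; exact: le_trans uv.
  - exists (g `&` g'); first exact: Ameet.
    by rewrite lexI (le_trans _ gu) ?(le_trans _ gv) // leI2 // ?leIl ?leIr.
  - by apply: noJ; exists g => //; exact: Jdown gu Ju.
split=> //.
- by apply: Aup Aa; exact: lex1.
- by move/AJ.
- move=> u v Auv; apply: NNPP => /not_or_and [nAu nAv].
  have [g1 Ag1 Jg1] := meets_J u nAu; have [g2 Ag2 Jg2] := meets_J v nAv.
  apply: (AJ _ (Ameet _ _ (Ameet _ _ Ag1 Ag2) Auv)).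
  apply: (Jdown _ _ _ (Jjoin _ _ Jg1 Jg2)).
  by rewrite meetUr leU2 // leI2 // ?leIl ?leIr.
Qed.

Theorem prime_filter_separation : exists P, [/\ prime_filter P, P a & forall z, P z -> ~ J z].
Proof.
have [A [fA Amax]] := avoiding_filter_maximal.
by exists A; split; [exact: maximal_avoiding_filter_prime | case: fA | case: fA].
Qed.

End PrimeFilterTheorem.

Section Irreducibles.
Context {disp : Order.disp_t} {M : tbDistrLatticeType disp}.

Lemma cmi_prime {x : M} : cmi x -> prime_filter (not_below x).
Proof.
case=> xt cx; split=> [|/(_ (le0x x)) //|u v uv nux vx|u v nux nvx uvx|u v nuvx].
- by rewrite /not_below le1x; apply/negP.
- exact/nux/(le_trans uv).
- have glb : is_glb (fun w => w = u \/ w = v) (u `&` v).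
    by split=> [w [->|->]|m lb]; rewrite ?leIl ?leIr // lexI !lb; auto.
  by have [w [[->|->] wx]] := cx _ _ glb uvx.
- by apply: NNPP => /not_or_and [/NNPP ux /NNPP vx]; apply: nuvx; rewrite leUx ux.
Qed.

Lemma strict_incl_not_below (y z : M) : strict_incl (not_below z) (not_below y) <-> y < z.
Proof.
split=> [[sub [w [nwy nnwz]]]|yz].
- rewrite lt_neqAle; apply/andP; split.
  + by apply/negP => /eqP yz; apply: nnwz; rewrite -yz.
  + by apply: NNPP => nyz; apply: (sub y nyz).
- split=> [w nwz wy|]; first exact/nwz/(le_trans wy (ltW yz)).
  by exists z; split; [rewrite /not_below lt_geF | apply].
Qed.

Lemma principal_cmi {P : M -> Prop} {p y : M} :
  (forall u, P u <-> p <= u) -> (forall z, P z <-> ~ z <= y) -> cmi y.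
Proof.
move=> hp hy; split=> [|A m [_ mgr] my].
- by apply/negP => /eqP yt; apply: ((hy \top).1 ((hp \top).2 (lex1 p))); rewrite yt.
apply: NNPP => noA; apply: ((hy m).1 ((hp m).2 _) my).
by apply: mgr => u Au; apply/(hp u).1/(hy u).2 => uy; apply: noA; exists u.
Qed.

Lemma is_glb_principal {P : M -> Prop} {p : M} : (forall u, P u <-> p <= u) -> is_glb P p.
Proof. by move=> hp; split=> [u /hp //|m lb]; apply/lb/hp. Qed.

End Irreducibles.

Section Duality.
Context {disp : Order.disp_t} {M : tbDistrLatticeType disp}.

Lemma coheight_le_compl (J : M^d -> Prop) (P : M -> Prop) n :
  (forall z, P z <-> ~ J z) -> coheight_le J n <-> height_le P n.
Proof.
move=> PJ; split.
- apply: (frank_le_sim (fun (P : M -> Prop) (J : M^d -> Prop) => forall z, P z <-> ~ J z)) PJ.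
  move=> {}P {}J Q PJ' pQ [QP [w [Pw nQw]]].
  exists (fun z => ~ Q z); split; first exact: prime_filter_compl.
    by split=> [z Jz Qz|]; [exact: (PJ' z).1 (QP z Qz) Jz | exists w; rewrite -(PJ' w)].
  by move=> z; split=> [Qz /(_ Qz)|/NNPP].
- apply: (frank_le_sim (fun (J : M^d -> Prop) (P : M -> Prop) => forall z, P z <-> ~ J z)) PJ.
  move=> {}J {}P J' PJ' pJ' [JJ' [w [J'w nJw]]].
  exists (fun z => ~ J' z); split=> //; first exact: (prime_filter_compl (M := M^d)).
  split=> [z nJ'z|]; first by apply/PJ' => /JJ'.
  by exists w; split; [exact/PJ' | apply].
Qed.

Lemma dim_dual_eq_height {x : M} {r} :
  prime_filter (not_below x) -> height_eq (not_below x) r -> dim_eq (x : M^d) r.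
Proof.
move=> pU hU; split.
- exists (fun z : M^d => ~ not_below x z); split; first exact: prime_filter_compl.
    by apply; exact: lexx.
  apply: frank_eq_transfer hU => n; apply: iff_sym; apply: coheight_le_compl => z.
  by split=> [nzx|/NNPP]; [apply | ].
- move=> J [_ _ Jup _ _] Jx; apply/(coheight_le_compl J (fun z => ~ J z)) => //.
  by apply: height_le_sub hU.1 => z nJz zx; exact/nJz/(Jup x z zx Jx).
Qed.

Lemma codim_eq_principal {P : M -> Prop} {p : M} {r} : prime_filter P ->
  (forall u, P u <-> p <= u) -> height_eq P r -> codim_eq p r.
Proof.
move=> pP hp [hPr Pmin]; split=> [|R [_ _ Rup _ _] Rp m mr hR].
  by exists P; split=> //; apply/hp.
by apply: (Pmin m mr); apply: height_le_sub hR => u /hp pu; exact: Rup _ _ pu Rp.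
Qed.

End Duality.

Section FiniteHeight.
Context {disp : Order.disp_t} {M : tbDistrLatticeType disp}.
Hypotheses (cH : coHeyting M) (hD : hausdorff M).

Lemma prime_filter_codiff {R : M -> Prop} {a b c : M} : prime_filter R -> is_codiff a b c -> R c ->
  exists R', [/\ prime_filter R', (forall z, R' z -> R z), R' a & ~ R' b].
Proof.
case=> _ Rb Rup _ Rjoin [abc cmin] Rc.
pose J z := exists2 w, ~ R w & z <= b `|` w.
have Jb : J b by exists \bot; rewrite ?joinx0.
have J0 : J \bot by exists \bot; rewrite ?le0x.
have Jdown u v : u <= v -> J v -> J u by move=> uv [w nRw vw]; exists w => //; exact: le_trans vw.
have Jjoin u v : J u -> J v -> J (u `|` v).
  move=> [w nRw uw] [w' nRw' vw']; exists (w `|` w'); first by case/Rjoin.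
  by rewrite leUx (le_trans uw) ?(le_trans vw') // leU2 ?leUl ?leUr.
have nJa : ~ J a by move=> [w nRw /cmin cw]; exact/nRw/(Rup _ _ cw Rc).
have [P [pP Pa PJ]] := prime_filter_separation J a J0 Jdown Jjoin nJa.
exists P; split=> // [z Pz|Pb]; last exact: PJ b Pb Jb.
by apply: NNPP => nRz; apply: (PJ z Pz); exists z; rewrite ?leUr.
Qed.

Lemma prime_separation {z y : M} : ~ z <= y ->
  exists R, [/\ prime_filter R, exists n, height_le R n, R z & ~ R y].
Proof.
move=> nzy; have [c [zc cmin]] := cH z y.
have c0 : c != \bot by apply/negP => /eqP c0; apply: nzy; rewrite c0 joinx0 in zc.
have [n [[R0 [pR0 R0c [hR0 _]]] _]] := hD c c0.
have [R [pR RR0 Rz nRy]] := prime_filter_codiff pR0 (conj zc cmin) R0c.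
by exists R; split=> //; exists n; exact: height_le_sub RR0 hR0.
Qed.

Lemma cmi_finite_height {x : M} : cmi x -> exists n, height_le (not_below x) n.
Proof.
case=> _ cx; apply: NNPP => infU.
suff /cx/(_ (le0x x)) [a []] : is_glb (not_below x) \bot by [].
split=> [a _|m lbm]; first exact: le0x.
apply: NNPP => nm; apply: infU.
have m0 : m != \bot by apply/negP => /eqP m0; apply: nm; rewrite m0.
have [n [[R [[_ _ Rup _ _] Rm [hR _]]] _]] := hD m m0.
by exists n; apply: height_le_sub hR => z Uz; exact: Rup _ _ (lbm z Uz) Rm.
Qed.

Section Principal.
Context {P : M -> Prop} {h : nat} {s : seq M}.
Hypotheses (pP : prime_filter P) (hP : height_le P h)
  (hs : forall u, exists2 b, b \in s & cong_mod (fun c => codim_ge c h.+2) u b).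

Lemma prime_sub_of_upper {y : M} : (forall b, b \in s -> ~ P b -> b <= y) ->
  forall R, prime_filter R -> height_le R h.+1 -> ~ R y -> forall u, R u -> P u.
Proof.
move=> ymax R pR hR nRy u Ru; apply: NNPP => nPu.
have [b bs ub] := hs u.
have Rb : R b by apply/(prime_cong_mod pR hR (ltnSn _) ub).
have nPb : ~ P b by move/(prime_cong_mod pP hP (ltnW (ltnSn h.+1)) ub).
by case: pR => _ _ Rup _ _; exact/nRy/(Rup _ _ (ymax b bs nPb) Rb).
Qed.

Lemma prime_super_of_lower {a : M} : (forall b, b \in s -> P b -> a <= b) ->
  forall R, prime_filter R -> height_le R h.+1 -> R a -> forall u, P u -> R u.
Proof.
move=> amin R pR hR Ra u Pu; apply: NNPP => nRu.
have [b bs ub] := hs u.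
have Pb : P b by apply/(prime_cong_mod pP hP (ltnW (ltnSn h.+1)) ub).
have nRb : ~ R b by move/(prime_cong_mod pR hR (ltnSn _) ub).
by case: pR => _ _ Rup _ _; exact/nRb/(Rup _ _ (amin b bs Pb) Ra).
Qed.

Lemma finite_height_prime_sub_of_upper {y : M} : (forall b, b \in s -> ~ P b -> b <= y) ->
  forall R, prime_filter R -> (exists n, height_le R n) -> ~ R y -> forall u, R u -> P u.
Proof.
move=> ymax R pR [n hR] nRy.
have [hR1|nhR1] := classic (height_le R h.+1).
  exact: prime_sub_of_upper ymax R pR hR1 nRy.
have nhR : ~ height_le R h by move/(frank_le_mono (leqnSn h)).
(* A prime below R of height exactly h+1 would lie inside P, of height at most h. *)
have [Q [pQ QR hQ nhQ]] := height_le_descent pR hR nhR.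
have QP := prime_sub_of_upper ymax Q pQ hQ (fun Qy => nRy (QR y Qy)).
by case: nhQ; exact: height_le_sub QP hP.
Qed.

End Principal.

Hypothesis pC : precompact M.

Lemma finite_height_prime_principal {P : M -> Prop} {h} : prime_filter P -> height_le P h ->
  exists p y, (forall u, P u <-> p <= u) /\ (forall z, P z <-> ~ z <= y).
Proof.
move=> pP hP; have [s hs] := pC h.+2 isT.
have [a Pa amin] := prime_filter_seq_lower s pP.
have [y nPy ymax] := prime_filter_seq_upper s pP.
have RP := finite_height_prime_sub_of_upper pP hP hs ymax.
have PR := prime_super_of_lower pP hP hs amin.
have [p [ayp pmin]] := cH a y.
case: (pP) => _ _ Pup _ Pjoin.
have Pp : P p by case: (Pjoin _ _ (Pup _ _ ayp Pa)).
exists p, y; split=> [u|z]; split.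
- move=> Pu; apply: NNPP => npu; have [R [pR [n hR] Rp nRu]] := prime_separation npu.
  have [R' [pR' R'R R'a nR'y]] := prime_filter_codiff pR (conj ayp pmin) Rp.
  have R'P := RP R' pR' (ex_intro _ n (height_le_sub R'R hR)) nR'y.
  have hR' : height_le R' h.+1 := frank_le_mono (leqnSn h) (height_le_sub R'P hP).
  exact/nRu/R'R/(PR R' pR' hR' R'a).
- by move=> pu; exact: Pup pu Pp.
- by move=> Pz zy; exact/nPy/(Pup _ _ zy Pz).
- move=> nzy; apply: NNPP => nPz.
  by have [R [pR hR Rz nRy]] := prime_separation nzy; exact/nPz/(RP R pR hR nRy z Rz).
Qed.

Lemma finite_height_prime_cmi {Q : M -> Prop} {n} : prime_filter Q -> height_le Q n ->
  exists2 y, cmi y & forall z, Q z <-> not_below y z.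
Proof.
move=> pQ hQ; have [p [y [hp hy]]] := finite_height_prime_principal pQ hQ.
by exists y => //; exact: principal_cmi hp hy.
Qed.

Lemma height_le_not_below (y : M) n : cmi y -> (exists N, height_le (not_below y) N) ->
  height_le (not_below y) n <-> frank_le (@cmi _ M) (fun a b => b < a) y n.
Proof.
move=> cy finy; split.
- apply: (frank_le_sim (fun (z : M) (Q : M -> Prop) => forall w, Q w <-> not_below z w)) => //.
  move=> z Q z' zQ cz' /strict_incl_not_below [sub [w [nwz nnwz']]].
  exists (not_below z'); split=> //; first exact: cmi_prime.
  by split=> [u /sub /zQ //|]; exists w; rewrite zQ.
- apply: (frank_le_sim (fun Q z => [/\ cmi z, forall w, Q w <-> not_below z w
    & exists N, height_le Q N])) => //.
  move=> Q z Q' [cz Qz [N hQ]] pQ' [Q'Q [w [Qw nQ'w]]].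
  have hQ' := height_le_sub Q'Q hQ.
  have [z' cz' Q'z'] := finite_height_prime_cmi pQ' hQ'.
  exists z'; split=> //; last by split=> //; exists N.
  apply/strict_incl_not_below; split=> [u /Q'z' /Q'Q /Qz //|].
  by exists w; rewrite -Qz -Q'z'.
Qed.

End FiniteHeight.

Theorem proposition6p8 (disp : Order.disp_t) (L : tbDistrLatticeType disp) (x : L) :
  coHeyting L -> hausdorff L -> precompact L -> cmi x ->
  exists r : nat,
    [/\ frank_eq (@cmi _ L) (fun y z : L => z < y) x r,
        dim_eq (x : L^d) r
      & exists xv : L, is_glb (fun y : L => ~ (y <= x)) xv /\ codim_eq xv r].
Proof.
move=> cH hD pC cx.
have pU := cmi_prime cx.
have finU := cmi_finite_height hD cx.
have [r hUr] := frank_eq_exists finU.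
have [p [_ [hp _]]] := finite_height_prime_principal cH hD pC pU hUr.1.
exists r; split.
- by apply: frank_eq_transfer hUr => n; exact: height_le_not_below.
- exact: dim_dual_eq_height.
- by exists p; split; [exact: is_glb_principal | exact: codim_eq_principal hUr].
Qed.
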